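(* Let $k$ be a field, $S=k[x_1,\ldots,x_N]$, and let $F\subset S$ be a robust set of prime quadratic binomials. Then no monomial appears as a term in two different polynomials of $F$.
   Context: A prime quadratic binomial is a homogeneous polynomial of degree $2$ of the form $c_1m_1+c_2m_2$ with $m_1\neq m_2$ monomials and $c_1,c_2$ nonzero, which generates a prime ideal (equivalently, is irreducible). A set $F$ of polynomials is robust if it is a Gröbner basis of $(F)$ with respect to every monomial term order and its elements minimally generate $(F)$. *)

From HB Require Import structures.
From mathcomp Require Import all_boot all_order all_algebra.
From mathcomp Require Import mpoly.
Set Implicit Arguments. Unset Strict Implicit. Unset Printing Implicit Defensive.
Import Order.TTheory GRing.Theory.
Local Open Scope ring_scope.

Section Defs.
Variables (k : fieldType) (N : nat).
Local Notation S := {mpoly k[N]}.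
Local Notation mon := 'X_{1..N}.

Definition in_ideal (F : seq S) (p : S) : Prop :=
  exists c : 'I_(size F) -> S, p = \sum_(i < size F) c i * F`_i.

Definition prime_ideal_gen (F : seq S) : Prop :=
  ~ in_ideal F 1 /\
  forall a b : S, in_ideal F (a * b) -> in_ideal F a \/ in_ideal F b.

Definition quadratic_binomial (f : S) : Prop :=
  f \is 2.-homog /\
  exists (c1 c2 : k) (m1 m2 : mon),
    [/\ m1 != m2, c1 != 0, c2 != 0 & f = c1 *: 'X_[m1] + c2 *: 'X_[m2]].

Definition prime_quadratic_binomial (f : S) : Prop :=
  quadratic_binomial f /\ prime_ideal_gen [:: f].

Definition term_order (le : rel mon) : Prop :=
  [/\ reflexive le, antisymmetric le, transitive le & total le] /\
  (forall m, le 0%MM m) /\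
  (forall m1 m2 m3, le m1 m2 -> le (m1 + m3)%MM (m2 + m3)%MM).

Definition is_lead (le : rel mon) (p : S) (m : mon) : Prop :=
  m \in msupp p /\ forall m', m' \in msupp p -> le m' m.

Definition groebner_basis (le : rel mon) (F : seq S) : Prop :=
  forall p, in_ideal F p -> p != 0 ->
    exists2 f, f \in F &
      exists mf mp, [/\ f != 0, is_lead le f mf, is_lead le p mp & (mf <= mp)%MM].

Definition minimal_generators (F : seq S) : Prop :=
  forall f, f \in F -> ~ in_ideal [seq g <- F | g != f] f.

Definition robust (F : seq S) : Prop :=
  (forall le, term_order le -> groebner_basis le F) /\ minimal_generators F.

End Defs.

From HB Require Import structures.
From mathcomp Require Import all_boot all_order all_algebra.
From mathcomp Require Import mpoly.
Set Implicit Arguments. Unset Strict Implicit. Unset Printing Implicit Defensive.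
Import Order.TTheory GRing.Theory.
Local Open Scope ring_scope.

(* Suppose f = a X^m + b X^m' and g = c X^m + d X^m'' in F share the monomial m.
   Primality forces m and m' (and m and m'') to have disjoint supports, so for
   the term order that first compares the weight <w, -> with w := m, the
   monomial m is the leading monomial of both f and g.  Then v := g_m f - f_m g
   lies in the degree-2 part of (F), which is the k-span of F, and all of its
   monomials are smaller than m.  Since F is a Groebner basis of homogeneous
   quadrics, v can be reduced to 0 by the elements of F whose leading monomials
   are smaller than m, none of which is f; hence f is a linear combination of
   the other elements of F, contradicting minimality. *)

Lemma count_lt_subpred (T : Type) (P Q : pred T) (s : seq T) :
  subpred Q P -> has (predD P Q) s -> (count Q s < count P s)%N.
Proof.
move=> QP; elim: s => //= x s IH /orP[/andP[nQx Px] | hs].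
  by rewrite (negbTE nQx) Px add0n add1n ltnS sub_count.
have QPx : (Q x <= P x)%N by case: (Q x) (QP x) => // ->.
by rewrite -addnS leq_add // IH.
Qed.

Lemma lem_mdeg_eq n (m1 m2 : 'X_{1..n}) :
  (m1 <= m2)%MM -> mdeg m1 = mdeg m2 -> m1 = m2.
Proof.
move=> le12; rewrite -(submK le12) mdegD => /eqP.
by rewrite -{1}[mdeg m1]add0n eqn_add2r eq_sym mdeg_eq0 => /eqP ->; rewrite add0m.
Qed.

Section Polynomials.
Variables (k : fieldType) (N : nat).
Local Notation S := {mpoly k[N]}.
Local Notation mon := 'X_{1..N}.

Lemma msize_dhomog d (p : S) : p != 0 -> p \is d.-homog -> msize p = d.+1.
Proof.
move=> p0 hp; have := dhomog_uniq p0 (dhomog_msize hp) hp.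
by move=> <-; apply: mpolySpred.
Qed.

Lemma in_ideal1_msize (f p : S) : in_ideal [:: f] p -> p != 0 ->
  (msize f <= msize p)%N.
Proof.
case=> c; rewrite big_ord1 /= => -> cf0.
have /andP[c0 f0] : (c ord0 != 0) && (f != 0) by rewrite -negb_or -mulf_eq0.
by rewrite msizeM // (mpolySpred _ c0) addSn leq_addl.
Qed.

Inductive kspan (L : seq S) : S -> Prop :=
| kspan0 : kspan L 0
| kspanS x c p : x \in L -> kspan L p -> kspan L (c *: x + p).

Lemma kspanD L p q : kspan L p -> kspan L q -> kspan L (p + q).
Proof.
elim=> [|x c p' xL _ IH] hq; first by rewrite add0r.
by rewrite -addrA; apply: kspanS => //; apply: IH.
Qed.

Lemma kspanZ L a p : kspan L p -> kspan L (a *: p).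
Proof.
elim=> [|x c p' xL _ IH]; first by rewrite scaler0; apply: kspan0.
by rewrite scalerDr scalerA; apply: kspanS.
Qed.

Lemma kspan_mem L x : x \in L -> kspan L x.
Proof. by move=> xL; have := kspanS 1 xL (kspan0 L); rewrite scale1r addr0. Qed.

Lemma kspan_dhomog d L p :
  {in L, forall x, x \is d.-homog} -> kspan L p -> p \is d.-homog.
Proof.
move=> hL; elim=> [|x c p' xL _ IH]; first exact: dhomog0.
by apply: dhomogD => //; apply/dhomogZ/hL.
Qed.

Lemma kspan_msupp L p m : kspan L p -> m \in msupp p ->
  exists2 x, x \in L & m \in msupp x.
Proof.
elim=> [|x c p' xL _ IH]; first by rewrite msupp0.
by move/msuppD_le; rewrite mem_cat => /orP[/msuppZ_le mx|/IH //]; exists x.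
Qed.

Lemma kspan_in_ideal L p : kspan L p -> in_ideal L p.
Proof.
elim=> [|x c p' xL _ [e ->]].
  by exists (fun _ => 0); rewrite big1 // => i _; rewrite mul0r.
pose j := Ordinal (etrans (index_mem x L) xL).
exists (fun i => e i + (if i == j then c%:MP else 0)).
rewrite [RHS](eq_bigr _ (fun i _ => mulrDl _ _ _)).
rewrite big_split /= addrC; congr (_ + _).
rewrite (bigD1 j) //= eqxx big1 ?addr0; last by move=> i /negbTE ->; rewrite mul0r.
by rewrite mul_mpolyC nth_index.
Qed.

Lemma kspan_uncancel L (p q : S) m : q \in L -> q@_m != 0 ->
  kspan L (q@_m *: p - p@_m *: q) -> kspan L p.
Proof.
move=> qL q0 /(kspanD (kspanZ (p@_m) (kspan_mem qL))) /(kspanZ (q@_m)^-1).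
by rewrite addrC subrK scalerA mulVf // scale1r.
Qed.

Section Lead.
Variable le : rel mon.
Hypotheses (le_refl : reflexive le) (le_anti : antisymmetric le)
  (le_trans : transitive le).

Lemma is_lead_uniq (p : S) m m' : is_lead le p m -> is_lead le p m' -> m = m'.
Proof. by move=> [mp lem] [mp' lem']; apply: le_anti; rewrite lem // lem'. Qed.

(* The usual cancellation of leading terms, with both sides scaled so that no
   division occurs. *)
Lemma msupp_cancel_lead (p q : S) m : is_lead le p m -> is_lead le q m ->
  {in msupp (q@_m *: p - p@_m *: q), forall x, le x m && (x != m)}.
Proof.
move=> [_ lep] [_ leq] x hx; apply/andP; split.
  by move/msuppB_le: hx; rewrite mem_cat => /orP[] /msuppZ_le; [apply: lep|apply: leq].
apply: contraTneq hx => ->.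
by rewrite mcoeff_msupp mcoeffB !mcoeffZ mulrC subrr eqxx.
Qed.

Lemma lt_mon_le_trans (x y z : mon) :
  le x y && (x != y) -> le y z -> le x z && (x != z).
Proof.
move=> /andP[lexy nxy] leyz; rewrite (le_trans lexy leyz).
apply: contra nxy => /eqP exz; rewrite -exz in leyz.
by apply/eqP/le_anti; rewrite lexy leyz.
Qed.

Section Reduce.
Variables (d : nat) (F : seq S) (f : S) (m1 : mon).
Hypotheses (gbF : groebner_basis le F) (homF : {in F, forall x, x \is d.-homog})
  (lead_f : is_lead le f m1).
Let G := [seq g <- F | g != f].

(* [below u] counts the monomials occurring in [F] that lie below the leading
   monomial of [u]; it is the termination measure of the reduction. *)
Let Ms := flatten [seq msupp x | x <- F].
Let below (u : S) := count (fun x => has (le x) (msupp u)) Ms.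

Lemma kspan_reduce u : kspan F u ->
  {in msupp u, forall x, le x m1 && (x != m1)} -> kspan G u.
Proof.
move: {2}(below u).+1 (ltnSn (below u)) => n; elim: n u => // n IH u hn uF ltu.
have [->|u0] := eqVneq u 0; first exact: kspan0.
have [h hF [mh [m [h0 lead_h lead_u le_mh_m]]]] :=
  gbF (kspan_in_ideal uF) u0.
have emh : mh = m.
  apply: lem_mdeg_eq le_mh_m _.
  by rewrite (dhomog_mf (homF hF) lead_h.1) (dhomog_mf (kspan_dhomog homF uF) lead_u.1).
subst mh.
have hG : h \in G.
  rewrite mem_filter hF andbT; apply: contraTneq (ltu _ lead_u.1) => ehf.
  by rewrite ehf in lead_h; rewrite (is_lead_uniq lead_h lead_f) eqxx andbF.
have hm0 : h@_m != 0 by rewrite -mcoeff_msupp; exact: lead_h.1.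
apply: (kspan_uncancel hG hm0).
set u' := _ - _; have ltu' := msupp_cancel_lead lead_u lead_h.
apply: IH.
- rewrite -ltnS; apply: leq_trans hn; apply: count_lt_subpred.
    move=> x /hasP [y /ltu' /andP[leym _] lexy]; apply/hasP.
    by exists m; [exact: lead_u.1|apply: le_trans leym].
  have [x xF mx] := kspan_msupp uF lead_u.1.
  apply/hasP; exists m.
    by apply/flattenP; exists (msupp x) => //; apply: map_f.
  apply/andP; split; last by apply/hasP; exists m; [exact: lead_u.1|exact: le_refl].
  apply/hasPn => y /ltu' /andP[leym nym]; apply: contra nym => lemy.
  by apply/eqP/le_anti; rewrite leym lemy.
- by rewrite /u' -scaleNr; apply: kspanD; apply: kspanZ => //; apply: kspan_mem.
- by move=> x /ltu' ltx; apply: lt_mon_le_trans ltx (andP (ltu _ lead_u.1)).1.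
Qed.

End Reduce.
End Lead.

Lemma mcoeff_binomial a b (m m' x : mon) :
  (a *: 'X_[m] + b *: 'X_[m'] : S)@_x = a * (m == x)%:R + b * (m' == x)%:R.
Proof. by rewrite mcoeffD !mcoeffZ !mcoeffX. Qed.

Lemma msupp_binomial a b (m m' x : mon) :
  x \in msupp (a *: 'X_[m] + b *: 'X_[m'] : S) -> x = m \/ x = m'.
Proof.
rewrite mcoeff_msupp mcoeff_binomial.
have [->|_] := eqVneq m x; first by left.
have [->|_] := eqVneq m' x; first by right.
by rewrite !mulr0 addr0 eqxx.
Qed.

Lemma mem_msupp_binomial a b (m m' : mon) : m' != m -> a != 0 ->
  m \in msupp (a *: 'X_[m] + b *: 'X_[m'] : S).
Proof.
move=> m'm a0; rewrite mcoeff_msupp mcoeff_binomial eqxx (negbTE m'm).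
by rewrite mulr0 addr0 mulr1.
Qed.

Lemma binomial_neq0 a b (m m' : mon) : m' != m -> a != 0 ->
  (a *: 'X_[m] + b *: 'X_[m'] : S) != 0.
Proof.
move=> m'm a0; rewrite -msupp_eq0.
by apply: contraTneq (mem_msupp_binomial b m'm a0) => ->.
Qed.

Lemma quadratic_binomial_at (f : S) m : quadratic_binomial f -> m \in msupp f ->
  exists a b m', [/\ m' != m, a != 0, b != 0 & f = a *: 'X_[m] + b *: 'X_[m']].
Proof.
move=> [_ [c1 [c2 [n1 [n2 [n12 c10 c20 ->]]]]]] /msupp_binomial [] ->.
  by exists c1, c2, n2; split; rewrite // eq_sym.
by exists c2, c1, n1; split; rewrite // addrC.
Qed.

(* If both monomials contained x_i, then f = x_i q with q of degree 1, and
   neither factor, being of degree 1, could lie in the prime ideal (f). *)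
Lemma prime_binomial_disjoint a b (m m' : mon) : m' != m -> a != 0 -> b != 0 ->
  prime_quadratic_binomial (a *: 'X_[m] + b *: 'X_[m'] : S) ->
  forall i, (m i * m' i = 0)%N.
Proof.
move=> m'm a0 b0; set f := _ + _ => -[[homf _] [_ primef]] i.
apply/eqP; apply: contraTT isT.
rewrite muln_eq0 negb_or -!lt0n => /andP[mi m'i].
pose e : mon := U_(i)%MM.
have le_e (x : mon) : (0 < x i)%N -> (e <= x)%MM.
  by move=> xi; apply/mnm_lepP => j; rewrite mnm1E; case: eqVneq => [<-|].
have mdeg_e (x : mon) : (0 < x i)%N -> x \in msupp f -> mdeg (x - e) = 1%N.
  move=> xi xf; have := mdegD (x - e) e.
  by rewrite submK ?le_e // (dhomog_mf homf xf) mdeg1 addn1 => -[].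
pose q : S := a *: 'X_[m - e] + b *: 'X_[m' - e].
have ef : f = 'X_[e] * q.
  by rewrite mulrDr -!scalerAr -!mpolyXD !(addmC e) !submK //; apply: le_e.
have f0 : f != 0 by apply: binomial_neq0.
have msize_f : msize f = 3%N by rewrite (msize_dhomog f0 homf).
have q0 : q != 0.
  apply: binomial_neq0 a0; apply: contra m'm => /eqP m'e.
  by rewrite -(submK (le_e _ m'i)) m'e submK //; apply: le_e.
have homq : q \is 1.-homog.
  apply: dhomogD; apply: dhomogZ; rewrite dhomogX; apply/eqP; apply: mdeg_e => //.
    exact: mem_msupp_binomial.
  by rewrite /f addrC mem_msupp_binomial // eq_sym.
have /primef [] : in_ideal [:: f] ('X_[e] * q).
  by exists (fun _ => 1); rewrite big_ord1 /= mul1r ef.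
  by move=> /in_ideal1_msize; rewrite msize_f msizeX mdeg1 -msupp_eq0 msuppX; apply.
by move=> /in_ideal1_msize /(_ q0); rewrite msize_f (msize_dhomog q0 homq).
Qed.

Definition mweight (w m : mon) : nat := (\sum_(i < N) w i * m i)%N.

Definition weighted_le (w : mon) : rel mon := fun m m' =>
  (mweight w m < mweight w m')%N ||
  ((mweight w m == mweight w m') && (m <= m')%O).

Lemma mweightD w m m' : mweight w (m + m')%MM = (mweight w m + mweight w m')%N.
Proof. by rewrite /mweight -big_split; apply: eq_bigr => i _; rewrite mnmDE mulnDr. Qed.

Lemma mweight0 w : mweight w 0%MM = 0%N.
Proof. by rewrite /mweight big1 // => i _; rewrite mnm0E muln0. Qed.

Lemma mweight_self_gt0 (m : mon) : m != 0%MM -> (0 < mweight m m)%N.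
Proof.
apply: contraNT; rewrite -leqNgt leqn0 -mdeg_eq0 mdegE /mweight !sum_nat_eq0.
by move=> /forallP hm; apply/forallP => i; have := hm i; rewrite muln_eq0 orbb.
Qed.

Lemma weighted_le_term_order w : term_order (weighted_le w).
Proof.
rewrite /weighted_le; split; [split|split].
- by move=> m; rewrite ltnn eqxx lexx orbT.
- move=> m m' /andP[]; case: ltngtP => //= _ le1 le2.
  by apply/le_anti; rewrite le1 le2.
- move=> m' m m''; case: (ltngtP (mweight w m) (mweight w m')) => //= h1.
    case: ltngtP => //= h2 _ _; first by rewrite (ltn_trans h1 h2).
    by rewrite -h2 h1.
  move=> le1; case: ltngtP => //= h2; first by rewrite h1 h2.
  by move=> le2; rewrite h1 h2 eqxx (le_trans le1 le2) orbT.
- by move=> m m'; case: ltngtP => //= _; apply: le_total.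
- move=> m; rewrite mweight0; case: posnP => [->|] //=.
  by rewrite -[X in (_ <= X)%O]add0m lemc_addr.
- by move=> m m' m''; rewrite !mweightD ltn_add2r eqn_add2r lemc_add2l.
Qed.

(* Disjointness makes the weight of the second monomial with respect to m
   vanish, while m has positive weight with respect to itself. *)
Lemma prime_binomial_weighted_lead (f : S) m : prime_quadratic_binomial f ->
  m \in msupp f -> is_lead (weighted_le m) f m.
Proof.
move=> pf mf; have [a [b [m' [m'm a0 b0 ef]]]] := quadratic_binomial_at pf.1 mf.
have w' : mweight m m' = 0%N.
  rewrite /mweight big1 // => i _; apply: (prime_binomial_disjoint m'm a0 b0).
  by rewrite -ef.
have m0 : m != 0%MM.
  by rewrite -mdeg_eq0 (dhomog_mf pf.1.1 mf).
split=> // x; rewrite ef => /msupp_binomial [] ->.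
  by have [[? _] _] := weighted_le_term_order m.
by rewrite /weighted_le w' mweight_self_gt0.
Qed.

End Polynomials.

Theorem lemma2p4 (k : fieldType) (N : nat) (F : seq {mpoly k[N]}) :
  (forall f, f \in F -> prime_quadratic_binomial f) ->
  robust F ->
  forall f g, f \in F -> g \in F -> f != g ->
  forall m : 'X_{1..N}, m \in msupp f -> m \notin msupp g.
Proof.
move=> primeF [gbF minF] f g fF gF fg m mf; apply/negP => mg.
have to_m := weighted_le_term_order m.
have [[le_refl le_anti le_trans _] _] := to_m.
have lead_f := prime_binomial_weighted_lead (primeF f fF) mf.
have lead_g := prime_binomial_weighted_lead (primeF g gF) mg.
have homF : {in F, forall x, x \is 2.-homog} by move=> x /primeF [[]].
have gG : g \in [seq x <- F | x != f] by rewrite mem_filter eq_sym fg.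
have g0 : g@_m != 0 by rewrite -mcoeff_msupp.
apply: (minF f fF); apply/kspan_in_ideal/(kspan_uncancel gG g0).
apply: (kspan_reduce le_refl le_anti le_trans (gbF _ to_m) homF lead_f).
  by rewrite -scaleNr; apply: kspanD; apply: kspanZ; apply: kspan_mem.
exact: (msupp_cancel_lead lead_f lead_g).
Qed.
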